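(* Let $(r_n)_{n\ge0},(b_n)_{n\ge0},(d_n)_{n\ge0}$ be arbitrary sequences of real numbers and $H_n=i^n\begin{pmatrix}r_n&ib_n\\-ib_n&d_n\end{pmatrix}$. Then there exist real signed Borel measures $\rho_{11},\rho_{12},\rho_{22}$ on $\mathbb R$, each a difference of two positive Borel measures having finite moments of all orders, such that the matrix measure $d\bar\rho=\begin{pmatrix}d\rho_{11}&i\,d\rho_{12}\\-i\,d\rho_{12}&d\rho_{22}\end{pmatrix}$ satisfies $\int_{\mathbb R}(i\mu)^n\,d\bar\rho(\mu)=H_n$ for all $n\ge0$. Equivalently, the function $S(\lambda)=I-\int_{\mathbb R}\frac{1}{\lambda-i\mu}\,d\bar\rho(\mu)\,\sigma_1$ has $n$-th moments $H^S_n:=\int_{\mathbb R}(i\mu)^nd\bar\rho(\mu)$ equal to $H_n$.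
   Context: $\sigma_1$ denotes a fixed invertible self-adjoint $2\times2$ matrix (in the paper, $\sigma_1=\begin{pmatrix}0&1\\1&0\end{pmatrix}$). *)

From HB Require Import structures.
From mathcomp Require Import all_boot all_order all_algebra.
From mathcomp Require Import all_classical all_reals all_analysis.
From mathcomp Require Import complex.
Set Implicit Arguments. Unset Strict Implicit. Unset Printing Implicit Defensive.
Import Order.TTheory GRing.Theory Num.Theory.
Import numFieldNormedType.Exports.
Local Open Scope classical_set_scope.
Local Open Scope ring_scope.
Local Open Scope complex_scope.

(* The real line with its Borel sigma-algebra (generated by the intervals ]a,b]). *)
Notation RB R := (measurableTypeR R).

Definition finite_moments (R : realType) (mu : {measure set (RB R) -> \bar R}) :=
  forall n : nat, mu.-integrable setT (fun x : RB R => ((x : R) ^+ n)%:E).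

Definition cintegral (R : realType) (mu : {measure set (RB R) -> \bar R})
  (f : R -> R[i]) : R[i] :=
  (Rintegral mu setT (fun x : RB R => complex.Re (f x)))%:C
  + 'i * (Rintegral mu setT (fun x : RB R => complex.Im (f x)))%:C.

(* A real signed measure given as a difference rho = mup - mum of positive
   measures; integral of a complex function against it. *)
Definition scintegral (R : realType) (mup mum : {measure set (RB R) -> \bar R})
  (f : R -> R[i]) : R[i] :=
  cintegral mup f - cintegral mum f.

Definition mxintegral (R : realType)
  (p11 m11 p12 m12 p22 m22 : {measure set (RB R) -> \bar R})
  (f : R -> R[i]) : 'M[R[i]]_2 :=
  \matrix_(j < 2, k < 2)
    if (j == 0) && (k == 0) then scintegral p11 m11 f
    else if (j == 0) && (k == 1) then 'i * scintegral p12 m12 f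
    else if (j == 1) && (k == 0) then - 'i * scintegral p12 m12 f
    else scintegral p22 m22 f.

Definition Hmat (R : realType) (r b d : nat -> R) (n : nat) : 'M[R[i]]_2 :=
  'i ^+ n *: \matrix_(j < 2, k < 2)
    if (j == 0) && (k == 0) then (r n)%:C
    else if (j == 0) && (k == 1) then 'i * (b n)%:C
    else if (j == 1) && (k == 0) then - 'i * (b n)%:C
    else (d n)%:C.

(** Each entry of the matrix measure is a real signed measure solving a
    moment problem for an arbitrary real sequence [s], since
    [int (i mu)^n d rho = i^n int mu^n d rho].  The signed measure is a sum of
    finitely supported blocks: block [k] carries the weight
    [c (-1)^(k-i) C(k,i) / (k! E^k)] at the point [i E], [i = 0..k], so its
    [n]-th moment is [c E^(n-k) Delta^k[x^n](0) / k!], which vanishes for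
    [n < k] and equals [c] for [n = k].  The coefficients [c_k] are therefore
    solved for triangularly from [s], and the scale [E_k] is taken so large
    that the moments of order [n < k] of block [k] are at most [2^-(k+1)] in
    absolute value; the positive and negative parts of the weights then give
    two positive measures whose moment series all converge. *)

From HB Require Import structures.
From mathcomp Require Import all_boot all_order all_algebra.
From mathcomp Require Import all_classical all_reals all_analysis.
From mathcomp Require Import complex measurable_realfun.
From mathcomp Require Import ring lra.
Set Implicit Arguments. Unset Strict Implicit. Unset Printing Implicit Defensive.
Import Order.TTheory GRing.Theory Num.Theory.
Import numFieldNormedType.Exports.
Local Open Scope ring_scope.
Local Open Scope complex_scope.

Section finite_difference_of_powers.
Variable R : comPzRingType.

(* The [k]-th finite difference of [x^n] at [0], i.e. [k!] times a Stirling
   number of the second kind. *)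
Definition fdiff_pow (k n : nat) : R :=
  \sum_(i < k.+1) ((-1) ^+ (k - i) * i%:R ^+ n) *+ 'C(k, i).

Lemma fdiff_pow0 k : fdiff_pow k.+1 0 = 0.
Proof.
rewrite /fdiff_pow.
transitivity (((-1 : R) + 1) ^+ k.+1); last by rewrite addNr expr0n.
by rewrite exprDn; apply: eq_bigr => i _; rewrite !expr1n !mulr1.
Qed.

Lemma fdiff_powSS k n :
  fdiff_pow k.+1 n.+1 = k.+1%:R * \sum_(j < n.+1) fdiff_pow k j *+ 'C(n, j).
Proof.
rewrite /fdiff_pow big_ord_recl /= expr0n /= mulr0 mul0rn add0r.
have absorb_i (i : 'I_k.+1) :
    ((-1 : R) ^+ (k.+1 - bump 0 i) * (bump 0 i)%:R ^+ n.+1) *+ 'C(k.+1, bump 0 i)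
    = k.+1%:R * (((-1) ^+ (k - i) * (i%:R + 1) ^+ n) *+ 'C(k, i)).
  rewrite /bump /= add1n subSS exprSr natr1.
  have bin : (i.+1%:R * 'C(k.+1, i.+1)%:R : R) = k.+1%:R * 'C(k, i)%:R.
    by rewrite -!natrM -mul_bin_diag.
  rewrite -(mulr_natr _ 'C(k.+1, i.+1)) -(mulr_natr _ 'C(k, i)).
  transitivity ((-1) ^+ (k - i) * i.+1%:R ^+ n * (i.+1%:R * 'C(k.+1, i.+1)%:R) : R).
    by ring.
  by rewrite bin; ring.
rewrite (eq_bigr _ (fun i _ => absorb_i i)) -mulr_sumr; congr (_ * _).
transitivity (\sum_(i < k.+1) \sum_(j < n.+1)
    (((-1 : R) ^+ (k - i) * i%:R ^+ j) *+ 'C(n, j)) *+ 'C(k, i)).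
  apply: eq_bigr => i _; rewrite exprD1n mulr_sumr -sumrMnl.
  by apply: eq_bigr => j _; rewrite mulrnAr.
rewrite exchange_big /=; apply: eq_bigr => j _.
by rewrite -sumrMnl; apply: eq_bigr => i _; rewrite -!mulrnA mulnC.
Qed.

Lemma fdiff_pow_small n k : (n < k)%N -> fdiff_pow k n = 0.
Proof.
elim/ltn_ind: n k => n IH [//|k] nk.
case: n IH nk => [|n] IH nk; first exact: fdiff_pow0.
rewrite fdiff_powSS big1 ?mulr0 // => j _.
by rewrite IH ?mul0rn //; exact: leq_trans (ltn_ord j) nk.
Qed.

Lemma fdiff_pow_diag n : fdiff_pow n n = n`!%:R.
Proof.
elim: n => [|n IH]; first by rewrite /fdiff_pow big_ord1 /= !expr0 mulr1 mulr1n.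
rewrite fdiff_powSS big_ord_recr /= big1 => [|j _]; last first.
  by rewrite fdiff_pow_small ?mul0rn.
by rewrite add0r IH binn mulr1n factS natrM.
Qed.

End finite_difference_of_powers.

Section atomic_measure.
Variable R : realType.
Variables (N : nat -> nat) (w : nat -> nat -> {nonneg R}) (x : nat -> nat -> R).

Definition atomic_measure : {measure set (RB R) -> \bar R} :=
  mseries (fun k => msum (fun i => mscale (w k i) (@dirac _ (RB R) (x k i) R)) (N k)) 0.

Lemma ge0_integral_atomic (g : RB R -> \bar R) :
  (forall t, 0 <= g t)%E -> measurable_fun [set: RB R] g ->
  (\int[atomic_measure]_(t in [set: RB R]) g t =
   \sum_(k <oo) \sum_(i < N k) (w k i)%:num%:E * g (x k i))%E.
Proof.
move=> g0 mg; rewrite ge0_integral_measure_series //; apply: eq_eseriesr => k _.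
rewrite ge0_integral_measure_sum //; apply: eq_bigr => i _.
rewrite ge0_integral_mscale //; congr (_ * _)%E.
by rewrite integral_dirac // diracE in_setT mul1e.
Qed.

Lemma integrable_Rintegral_atomic (f : RB R -> R) :
  measurable_fun [set: RB R] f -> (forall k i, 0 <= f (x k i)) ->
  (\sum_(k <oo) (\sum_(i < N k) (w k i)%:num * f (x k i))%:E < +oo)%E ->
  atomic_measure.-integrable setT (EFin \o f) /\
  Rintegral atomic_measure setT f =
    fine (\sum_(k <oo) (\sum_(i < N k) (w k i)%:num * f (x k i))%:E)%E.
Proof.
move=> mf f0 fin.
have mEf : measurable_fun [set: RB R] (EFin \o f) by exact/measurable_EFinP.
have sumE : (\sum_(k <oo) \sum_(i < N k) (w k i)%:num%:E * (f (x k i))%:E =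
             \sum_(k <oo) (\sum_(i < N k) (w k i)%:num * f (x k i))%:E)%E.
  by apply: eq_eseriesr => k _; rewrite -sumEFin; apply: eq_bigr => i _; rewrite EFinM.
split.
  apply/integrableP; split => //.
  rewrite ge0_integral_atomic //; last exact: measurableT_comp.
  apply: le_lt_trans fin; rewrite -sumE le_eqVlt; apply/orP; left; apply/eqP.
  apply: eq_eseriesr => k _; apply: eq_bigr => i _.
  by rewrite /comp abse_EFin ger0_norm.
rewrite /Rintegral integralE ge0_integral_atomic //; last exact: measurable_funepos.
rewrite ge0_integral_atomic //; last exact: measurable_funeneg.
rewrite [X in (_ - X)%E]eseries0; last first.
  move=> k _ _; apply: big1 => i _; rewrite funenegE.
  by rewrite (_ : maxe _ _ = 0%E) ?mule0 //; apply/max_idPr; rewrite oppe_le0 lee_fin.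
rewrite sube0 -sumE; congr fine; apply: eq_eseriesr => k _; apply: eq_bigr => i _.
by rewrite funeposE; congr (_ * _)%E; apply/max_idPl; rewrite lee_fin.
Qed.

End atomic_measure.

Section nonnegative_series.
Variable R : realType.

Lemma nneseries_lty_geometric_tail (u : nat -> R) m :
  (forall k, 0 <= u k) -> (forall k, (m <= k)%N -> u k <= (2 ^+ k.+1)^-1) ->
  (\sum_(k <oo) (u k)%:E < +oo)%E.
Proof.
move=> u0 ub.
set C : R := 1 + \sum_(j < m) u j * 2 ^+ j.+1.
have uC k : u k <= C / (2 ^ (k + 1))%:R.
  rewrite natrX addn1 ler_pdivlMr ?exprn_gt0 //.
  case: (ltnP k m) => km.
    apply: (@le_trans _ _ (\sum_(j < m) u j * 2 ^+ j.+1)); last by rewrite lerDr.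
    rewrite (bigD1 (Ordinal km)) //= lerDl.
    by apply: sumr_ge0 => j _; rewrite mulr_ge0 // exprn_ge0.
  apply: le_trans (_ : 1 <= C); last first.
    by rewrite lerDl sumr_ge0 // => j _; rewrite mulr_ge0 // exprn_ge0.
  by rewrite -ler_pdivlMr ?exprn_gt0 // div1r ub.
apply: (@le_lt_trans _ _ (C / 2 ^+ 0)%:E); last by rewrite ltry.
have := @cvg_geometric_eseries_half R C 0 => /cvg_lim <- //.
by apply: lee_nneseries => k _; rewrite lee_fin.
Qed.

Lemma fine_nneseriesB (u v : nat -> R) m :
  (forall k, 0 <= u k) -> (forall k, 0 <= v k) ->
  (\sum_(k <oo) (u k)%:E < +oo)%E -> (\sum_(k <oo) (v k)%:E < +oo)%E ->
  (forall k, (m <= k)%N -> u k = v k) ->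
  fine (\sum_(k <oo) (u k)%:E)%E - fine (\sum_(k <oo) (v k)%:E)%E =
    \sum_(k < m) (u k - v k).
Proof.
move=> u0 v0 fu fv uv.
rewrite (nneseries_split 0 m); last by move=> k _; rewrite lee_fin.
rewrite [in X in _ - fine X](nneseries_split 0 m); last by move=> k _; rewrite lee_fin.
have -> : (\sum_(0 + m <= k <oo) (v k)%:E = \sum_(0 + m <= k <oo) (u k)%:E)%E.
  apply: congr_lim; apply/funext => n; apply: eq_big_nat => i /andP[mi _].
  by rewrite uv.
have tail_fin : (\sum_(0 + m <= k <oo) (u k)%:E)%E \is a fin_num.
  rewrite ge0_fin_numE; last by apply: nneseries_ge0 => k _ _; rewrite lee_fin.
  apply: le_lt_trans fu; rewrite (nneseries_split 0 m); last by move=> k _; rewrite lee_fin.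
  by rewrite leeDr // sume_ge0 // => k _; rewrite lee_fin.
rewrite -(fineK tail_fin) !add0n !sumEFin -!EFinD /= !big_mkord sumrB.
by ring.
Qed.

End nonnegative_series.

Section real_moment_problem.
Variables (R : realType) (s : nat -> R).

(* For [n < k] the moments of block [k] are bounded by [|c| 2^k k^k / E];
   this [E] makes that bound at most [2^-(k+1)]. *)
Definition block_scale (c : R) (k : nat) : R := 1 + `|c| * 2 ^+ (k + k.+1) * k%:R ^+ k.

Lemma block_scale_ge1 c k : 1 <= block_scale c k.
Proof. by rewrite lerDl !mulr_ge0 // exprn_ge0. Qed.

Lemma block_scale_gt0 c k : 0 < block_scale c k.
Proof. exact: lt_le_trans ltr01 (block_scale_ge1 c k). Qed.

Definition block_moment (c : R) (k n : nat) : R :=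
  block_scale c k ^+ n / (k`!%:R * block_scale c k ^+ k) * fdiff_pow R k n.

Lemma block_moment_small c k n : (n < k)%N -> block_moment c k n = 0.
Proof. by move=> nk; rewrite /block_moment fdiff_pow_small ?mulr0. Qed.

Lemma block_moment_diag c k : block_moment c k k = 1.
Proof.
rewrite /block_moment fdiff_pow_diag.
have fact_neq0 : (k`!%:R : R) != 0 by rewrite pnatr_eq0 -lt0n fact_gt0.
have scale_neq0 : block_scale c k ^+ k != 0 by rewrite expf_neq0 // gt_eqF // block_scale_gt0.
by field; rewrite fact_neq0 scale_neq0.
Qed.

Fixpoint coefs (m : nat) : nat -> R :=
  match m with
  | 0 => fun _ => 0
  | m.+1 => fun k => if k == m then s m - \sum_(j < m) coefs m j * block_moment (coefs m j) j m
                     else coefs m k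
  end.

Definition coef (k : nat) : R := coefs k.+1 k.

Lemma coefsE m k : (k < m)%N -> coefs m k = coef k.
Proof.
elim: m => // m IH; rewrite ltnS leq_eqVlt => /orP[/eqP-> // | km] /=.
by rewrite ifN ?IH // ltn_eqF.
Qed.

Lemma sum_coef_block_moment n :
  \sum_(k < n.+1) coef k * block_moment (coef k) k n = s n.
Proof.
rewrite big_ord_recr /= block_moment_diag mulr1.
have -> : coef n = s n - \sum_(j < n) coef j * block_moment (coef j) j n.
  rewrite /coef /= eqxx; congr (_ - _); apply: eq_bigr => j _.
  by rewrite coefsE.
by ring.
Qed.

Let E k := block_scale (coef k) k.

Definition weight (k i : nat) : R :=
  coef k * ((-1) ^+ (k - i) *+ 'C(k, i)) / (k`!%:R * E k ^+ k).

Definition atom (k i : nat) : R := i%:R * E k.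

Lemma atom_ge0 k i : 0 <= atom k i.
Proof. by rewrite mulr_ge0 // ltW // block_scale_gt0. Qed.

Lemma sum_weight_atom k n :
  \sum_(i < k.+1) weight k i * atom k i ^+ n = coef k * block_moment (coef k) k n.
Proof.
rewrite /block_moment /fdiff_pow !mulr_sumr; apply: eq_bigr => i _.
rewrite /weight /atom -(mulr_natr _ 'C(k, i)) -(mulr_natr ((-1) ^+ (k - i) * _) 'C(k, i)).
by rewrite exprMn; ring.
Qed.

Lemma abs_weight_atom_le k n (i : 'I_k.+1) : (n < k)%N ->
  `|weight k i| * atom k i ^+ n <= `|coef k| * 'C(k, i)%:R * k%:R ^+ k / E k.
Proof.
move=> nk.
have E1 : 1 <= E k := block_scale_ge1 _ _.
have E0 : 0 < E k := block_scale_gt0 _ _.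
have fact_ge1 : 1 <= k`!%:R :> R by rewrite ler1n fact_gt0.
have En : E k ^+ n * E k <= E k ^+ k by rewrite -exprSr; exact: ler_weXn2l.
have i_pow : (i%:R : R) ^+ n <= k%:R ^+ k.
  apply: (@le_trans _ _ (k%:R ^+ n)); first by rewrite lerXn2r ?nnegrE ?ler_nat // -ltnS.
  by apply: ler_weXn2l; [rewrite ler1n; exact: leq_ltn_trans (leq0n n) nk | exact: ltnW].
rewrite /weight /atom normrM normrM normrMn normr_sign.
rewrite [`|_^-1|]ger0_norm; last by rewrite invr_ge0 mulr_ge0 ?exprn_ge0 // ltW.
rewrite exprMn -!mulrA; do 2 apply: ler_wpM2l => //.
rewrite ler_pdivlMr // -!mulrA ler_pdivrMl ?mulr_gt0 ?exprn_gt0 //.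
apply: (@le_trans _ _ (k%:R ^+ k * E k ^+ k)).
  by apply: ler_pM; rewrite ?exprn_ge0 ?mulr_ge0 ?exprn_ge0 // ltW.
rewrite [X in _ <= X]mulrC mulrA; apply: ler_wpM2r; first by rewrite exprn_ge0 // ltW.
by rewrite -{1}[k%:R ^+ k]mulr1 ler_wpM2l ?exprn_ge0 // (le_trans ler01).
Qed.

Lemma sum_abs_weight_atom_le k n : (n < k)%N ->
  \sum_(i < k.+1) `|weight k i| * atom k i ^+ n <= (2 ^+ k.+1)^-1.
Proof.
move=> nk; apply: le_trans (ler_sum _ (fun i _ => abs_weight_atom_le i nk)) _.
rewrite (eq_bigr (fun i : 'I_k.+1 => (`|coef k| * k%:R ^+ k / E k) * 'C(k, i)%:R)); last first.
  by move=> i _; ring.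
have two_pow : (2 : R) ^+ k = \sum_(i < k.+1) 'C(k, i)%:R.
  by rewrite -[2]/(1 + 1 : R) exprD1n; apply: eq_bigr => i _; rewrite expr1n.
rewrite -mulr_sumr -two_pow mulrAC ler_pdivrMr ?block_scale_gt0 //.
rewrite [X in _ <= X]mulrC ler_pdivlMr ?exprn_gt0 // /E /block_scale exprD.
set X := `|coef k|; set Y := (2 : R) ^+ k; set Z := (2 : R) ^+ k.+1; set W := k%:R ^+ k.
have : X * Y * W * Z = X * W * Y * Z by ring.
lra.
Qed.

Lemma max0_ge0 (y : R) : 0 <= Num.max y 0.
Proof. by rewrite le_max lexx orbT. Qed.

Definition weight_pos k i : {nonneg R} := NngNum (max0_ge0 (weight k i)).
Definition weight_neg k i : {nonneg R} := NngNum (max0_ge0 (- weight k i)).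

Definition part_moment (w : nat -> nat -> {nonneg R}) (n k : nat) : R :=
  \sum_(i < k.+1) (w k i)%:num * atom k i ^+ n.

Lemma part_moment_ge0 w n k : 0 <= part_moment w n k.
Proof. by apply: sumr_ge0 => i _; rewrite mulr_ge0 // exprn_ge0 // atom_ge0. Qed.

Lemma part_moment_lty w n : (forall k i, (w k i)%:num <= `|weight k i|) ->
  (\sum_(k <oo) (part_moment w n k)%:E < +oo)%E.
Proof.
move=> w_le; apply: (nneseries_lty_geometric_tail (m := n.+1)) => [k|k nk].
  exact: part_moment_ge0.
apply: le_trans _ (sum_abs_weight_atom_le nk); apply: ler_sum => i _.
by rewrite ler_wpM2r ?exprn_ge0 ?atom_ge0.
Qed.

Lemma part_moment_lty_pos n : (\sum_(k <oo) (part_moment weight_pos n k)%:E < +oo)%E.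
Proof. by apply: part_moment_lty => k i; rewrite /= ge_max ler_norm normr_ge0. Qed.

Lemma part_moment_lty_neg n : (\sum_(k <oo) (part_moment weight_neg n k)%:E < +oo)%E.
Proof. by apply: part_moment_lty => k i; rewrite /= ge_max -normrN ler_norm normr_ge0. Qed.

Lemma part_momentB n k :
  part_moment weight_pos n k - part_moment weight_neg n k =
    coef k * block_moment (coef k) k n.
Proof.
rewrite -sum_weight_atom -sumrB; apply: eq_bigr => i _.
by rewrite -mulrBl /= oppr_max opprK oppr0 addr_max_min addr0.
Qed.

Definition posm := atomic_measure (fun k => k.+1) weight_pos atom.
Definition negm := atomic_measure (fun k => k.+1) weight_neg atom.

Lemma signed_moments n :
  [/\ posm.-integrable setT (fun t : RB R => (t ^+ n)%:E),
      negm.-integrable setT (fun t : RB R => (t ^+ n)%:E) &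
      Rintegral posm setT (fun t : RB R => t ^+ n) -
      Rintegral negm setT (fun t : RB R => t ^+ n) = s n].
Proof.
have atom_pow_ge0 k i : 0 <= atom k i ^+ n by rewrite exprn_ge0 // atom_ge0.
have mpow : measurable_fun [set: RB R] (fun t : RB R => t ^+ n) by exact: exprn_measurable.
have [ip ->] := integrable_Rintegral_atomic mpow atom_pow_ge0 (part_moment_lty_pos n).
have [im ->] := integrable_Rintegral_atomic mpow atom_pow_ge0 (part_moment_lty_neg n).
split => //.
have tail k : (n.+1 <= k)%N -> part_moment weight_pos n k = part_moment weight_neg n k.
  by move=> nk; apply/eqP; rewrite -subr_eq0 part_momentB block_moment_small ?mulr0.
have := fine_nneseriesB (part_moment_ge0 _ n) (part_moment_ge0 _ n)
          (part_moment_lty_pos n) (part_moment_lty_neg n) tail.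
rewrite /part_moment => ->.
by rewrite -[RHS](sum_coef_block_moment n); apply: eq_bigr => k _; exact: part_momentB.
Qed.

End real_moment_problem.

Lemma signed_moment_problem (R : realType) (s : nat -> R) :
  exists p m : {measure set (RB R) -> \bar R},
    [/\ finite_moments p, finite_moments m &
      forall n, Rintegral p setT (fun t : RB R => t ^+ n) -
                Rintegral m setT (fun t : RB R => t ^+ n) = s n].
Proof.
by exists (posm s), (negm s); split => n; have [] := signed_moments s n.
Qed.

Section complex_moments.
Variable R : realType.

Lemma cintegral_scale (mu : {measure set (RB R) -> \bar R}) (z : R[i]) (f : RB R -> R) :
  mu.-integrable setT (EFin \o f) ->
  cintegral mu (fun t => z * (f t)%:C) = z * (Rintegral mu setT f)%:C.
Proof.
case: z => a b intf.
have ReM t : complex.Re ((a +i* b) * (f t)%:C) = a * f t by rewrite /=; ring.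
have ImM t : complex.Im ((a +i* b) * (f t)%:C) = b * f t by rewrite /=; ring.
rewrite /cintegral (eq_fun ReM) (eq_fun ImM) !RintegralZl //.
move: (Rintegral _ _ f) => I.
by apply/eqP; rewrite eq_complex /=; apply/andP; split; apply/eqP; ring.
Qed.

Lemma scintegral_ipow (p m : {measure set (RB R) -> \bar R}) (s : nat -> R) :
  finite_moments p -> finite_moments m ->
  (forall n, Rintegral p setT (fun t : RB R => t ^+ n) -
             Rintegral m setT (fun t : RB R => t ^+ n) = s n) ->
  forall n, scintegral p m (fun mu : R => ('i * mu%:C) ^+ n) = 'i ^+ n * (s n)%:C.
Proof.
move=> fp fm ps n.
have -> : (fun mu : R => ('i * mu%:C) ^+ n) = (fun mu => 'i ^+ n * (mu ^+ n)%:C).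
  by apply/funext => mu; rewrite exprMn rmorphXn.
by rewrite /scintegral !cintegral_scale ?(fp n, fm n) // -ps raddfB mulrBr.
Qed.

End complex_moments.

Theorem mainTheorem11 (R : realType) (r b d : nat -> R) :
  exists p11 m11 p12 m12 p22 m22 : {measure set (measurableTypeR R) -> \bar R},
    (finite_moments p11 /\ finite_moments m11 /\ finite_moments p12 /\
     finite_moments m12 /\ finite_moments p22 /\ finite_moments m22) /\
    forall n : nat,
      mxintegral p11 m11 p12 m12 p22 m22 (fun mu : R => ('i * mu%:C) ^+ n)
      = Hmat r b d n.
Proof.
have [p11 [m11 [fp11 fm11 mom11]]] := signed_moment_problem r.
have [p12 [m12 [fp12 fm12 mom12]]] := signed_moment_problem b.
have [p22 [m22 [fp22 fm22 mom22]]] := signed_moment_problem d.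
exists p11, m11, p12, m12, p22, m22; split; first by [].
move=> n; apply/matrixP => j k; rewrite /mxintegral /Hmat !mxE.
rewrite (scintegral_ipow fp11 fm11 mom11) (scintegral_ipow fp12 fm12 mom12).
rewrite (scintegral_ipow fp22 fm22 mom22).
by case: j => [[|[|//]]] ?; case: k => [[|[|//]]] ? //=; rewrite mulrCA.
Qed.
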